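(* Let $\Sigma$ be a signature on standard form over a variable system with the de Bruijn property, $F:\mathcal F_\Sigma\to\mathcal C$ a cwf morphism, $\Pi$ a predicate signature on standard form over $\Sigma$, and $\mathcal D$ a first-order hyperdoctrine over $\mathcal C$. Let $G:\mathcal H_{\Sigma,\Pi,\emptyset}\to\mathcal D$ be an $F$-based hyperdoctrine morphism, and $T$ a theory over $(\Sigma,\Pi)$ such that $G_\Gamma(\Gamma,\phi)\le G_\Gamma(\Gamma,\psi)$ for every sequent $(\phi\Rightarrow_\Gamma\psi)\in T$. Then $G_\Gamma(\Gamma,\phi)\le G_\Gamma(\Gamma,\psi)$ for every $(\phi\Rightarrow_\Gamma\psi)\in\mathrm{Thm}(\Sigma,\Pi,T)$; consequently $G$ (with the same components) is an $F$-based hyperdoctrine morphism $\mathcal H_{\Sigma,\Pi,T}\to\mathcal D$, i.e. a model of $T$.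
   Context: Type system: fix an infinite set $V$ of variables with decidable equality and a fresh variable provider: functions $\varphi,\mathsf{fr}$ assigning to each finite $X\subseteq V$ an inhabited $\varphi(X)\subseteq V\setminus X$ and $\mathsf{fr}(X)\in\varphi(X)$; de Bruijn property: $\varphi(X)=\{\mathsf{fr}(X)\}$. Disjoint sets $F$ (function symbols), $T$ (type symbols). Preelements: terms from variables and $F$; pretypes $S(t_1,\ldots,t_n)$, $S\in T$. $\mathrm V(E)$: variables of $E$; $E[\bar a/\bar x]$: simultaneous substitution. Precontext $\Gamma=x_1:A_1,\ldots,x_n:A_n$ with $x_k\in\varphi(\{x_1,\ldots,x_{k-1}\})$, $\mathrm V(A_k)\subseteq\{x_1,\ldots,x_{k-1}\}$; $\mathrm{OV}(\Gamma)=x_1,\ldots,x_n$; $\mathrm{Fresh}(\Gamma)=\varphi(\mathrm V(\Gamma))$, $\mathrm{fresh}(\Gamma)=\mathsf{fr}(\mathrm V(\Gamma))$; $E[\bar a/\Gamma]=E[\bar a/x_1,\ldots,x_n]$. Top variables $\mathrm{TV}(\langle\rangle)=\emptyset$, $\mathrm{TV}(\Gamma,x:A)=(\mathrm{TV}(\Gamma)\setminus\mathrm V(A))\cup\{x\}$; a determining sequence is a strictly increasing $\bar i=i_1,\ldots,i_k$ with $\mathrm{TV}(\Gamma)\subseteq\{x_{i_1},\ldots,x_{i_k}\}$, $\bar a_{\bar i}=a_{i_1},\ldots,a_{i_k}$; a declaration is on standard form if $\bar i=1,\ldots,n$ (then $\bar i$ is omitted). Declarations $(\Gamma,S,\bar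 i)$ and $(\Gamma,f,\bar i,U)$ ($\mathrm V(U)\subseteq\mathrm V(\Gamma)$), each symbol at most once. $\mathcal J(\Sigma)$: smallest set of judgements closed under (R1) $\langle\rangle$ context; (R2) $\Gamma$ context, $A$ type $(\Gamma)$ $\Rightarrow$ $\Gamma,x:A$ context ($x\in\mathrm{Fresh}(\Gamma)$); (R3) $x_1:A_1,\ldots,x_n:A_n$ context $\Rightarrow$ $x_i:A_i\ (x_1:A_1,\ldots,x_n:A_n)$; (R4) $(\Gamma,S,\bar i)\in\Sigma$, $\bar a:\Delta\to\Gamma$ $\Rightarrow$ $S(\bar a_{\bar i})$ type $(\Delta)$; (R5) $(\Gamma,f,\bar i,U)\in\Sigma$, $\bar a:\Delta\to\Gamma$, $U[\bar a/\Gamma]$ type $(\Delta)$ $\Rightarrow$ $f(\bar a_{\bar i}):U[\bar a/\Gamma]\ (\Delta)$; where ''$\bar a:\Delta\to\Gamma$'' abbreviates $\Delta$ context, $\Gamma$ context, $a_k:A_k[a_1,\ldots,a_{k-1}/x_1,\ldots,x_{k-1}]\ (\Delta)$. $\Sigma$ is a signature if declared contexts are contexts and declared $U$ are types in $\mathcal J(\Sigma)$. Cwf: a category $\mathcal C$ with terminal object; classes $\mathrm{Ty}(\Gamma)$ with functorial substitution $A\{f\}$; context extension $\Gamma.A$ with $\mathrm p(A):\Gamma.A\to\Gamma$; classes $\mathrm{Tm}(\Gamma,A)$ with functorial $a\{f\}\in\mathrm{Tm}(\Delta,A\{f\})$; $\mathrm v_A\in\mathrm{Tm}(\Gamma.A,A\{\mathrm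 p(A)\})$; $\langle f,a\rangle_A:\Delta\to\Gamma.A$ for $a\in\mathrm{Tm}(\Delta,A\{f\})$ with $\mathrm p(A)\langle f,a\rangle_A=f$, $\mathrm v_A\{\langle f,a\rangle_A\}=a$, $\langle\mathrm p(A)h,\mathrm v_A\{h\}\rangle_A=h$, $\langle f,a\rangle_A g=\langle fg,a\{g\}\rangle_A$; $f.A=\langle f\circ\mathrm p(A\{f\}),\mathrm v_{A\{f\}}\rangle_A:\Delta.A\{f\}\to\Gamma.A$. A cwf morphism $(F,\sigma,\theta):\mathcal C\to\mathcal C'$: a functor $F$ preserving the terminal object, $\sigma_\Gamma:\mathrm{Ty}(\Gamma)\to\mathrm{Ty}'(F\Gamma)$ with $\sigma_\Delta(A\{f\})=\sigma_\Gamma(A)\{Ff\}$, $F(\Gamma.A)=F\Gamma.\sigma_\Gamma(A)$, $F(\mathrm p(A))=\mathrm p(\sigma_\Gamma(A))$, and $\theta_{\Gamma,A}:\mathrm{Tm}(\Gamma,A)\to\mathrm{Tm}'(F\Gamma,\sigma_\Gamma(A))$ commuting with substitution, with $\theta(\mathrm v_A)=\mathrm v_{\sigma_\Gamma(A)}$ and $F\langle f,a\rangle_A=\langle Ff,\theta(a)\rangle_{\sigma_\Gamma(A)}$. The cwf $\mathcal F_\Sigma$: objects are contexts $\Gamma$ (i.e. ($\Gamma$ context)$\in\mathcal J(\Sigma)$); morphisms $(\Delta,\Gamma,\bar a)$ with $\bar a:\Delta\to\Gamma$ in $\mathcal J(\Sigma)$, composed by substitution, identity $(\Gamma,\Gamma,\mathrm{OV}(\Gamma))$;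 $\mathrm{Ty}(\Gamma)=\{(\Gamma,A):(A\text{ type }(\Gamma))\in\mathcal J(\Sigma)\}$, $(\Gamma,A)\{(\Delta,\Gamma,\bar a)\}=(\Delta,A[\bar a/\Gamma])$; $\mathrm{Tm}(\Gamma,(\Gamma,A))=\{((\Gamma,A),a):(a:A\ (\Gamma))\in\mathcal J(\Sigma)\}$; $\Gamma.(\Gamma,S)=\langle\Gamma,\mathrm{fresh}(\Gamma):S\rangle$, $\mathrm p=(\Gamma.(\Gamma,S),\Gamma,\mathrm{OV}(\Gamma))$, $\mathrm v=((\Gamma.(\Gamma,S),S),\mathrm{fresh}(\Gamma))$, $\langle(\Delta,\Gamma,\bar s),((\Delta,S[\bar s/\Gamma]),b)\rangle=(\Delta,\Gamma.(\Gamma,S),(\bar s,b))$. Heyting (pre)algebra: a preorder $\le$ (not necessarily antisymmetric) with $\top,\bot,\wedge,\vee,\to$ satisfying $\bot\le x\le\top$, $z\le x\wedge y$ iff $z\le x$ and $z\le y$, $x\vee y\le z$ iff $x\le z$ and $y\le z$, $z\le(x\to y)$ iff $z\wedge x\le y$; morphisms are monotone maps preserving the operations and constants. A first-order hyperdoctrine over a cwf $\mathcal C$ is $(\mathcal C,\mathrm{Pr},\forall,\exists)$ with $\mathrm{Pr}:\mathcal C^{\mathrm{op}}\to\mathrm{Heyting}$ a functor ($R\{f\}=\mathrm{Pr}(f)(R)$) and, for $S\in\mathrm{Ty}(\Gamma)$, monotone $\forall_S,\exists_S:\mathrm{Pr}(\Gamma.S)\to\mathrm{Pr}(\Gamma)$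 with $Q\le\forall_S(R)$ iff $Q\{\mathrm p(S)\}\le R$, and $\exists_S(R)\le Q$ iff $R\le Q\{\mathrm p(S)\}$ ($Q\in\mathrm{Pr}(\Gamma)$, $R\in\mathrm{Pr}(\Gamma.S)$), and for $f:\Delta\to\Gamma$: $\forall_S(R)\{f\}=\forall_{S\{f\}}(R\{f.S\})$, $\exists_S(R)\{f\}=\exists_{S\{f\}}(R\{f.S\})$. Given a cwf morphism $F=(F,\sigma,\theta):\mathcal C\to\mathcal C'$ and hyperdoctrines $\mathcal H=(\mathcal C,\mathrm{Pr},\forall,\exists)$, $\mathcal H'=(\mathcal C',\mathrm{Pr}',\forall',\exists')$, an $F$-based morphism $G:\mathcal H\to\mathcal H'$ is a family of Heyting morphisms $G_\Gamma:\mathrm{Pr}(\Gamma)\to\mathrm{Pr}'(F\Gamma)$ with $G_\Delta(R\{f\})=G_\Gamma(R)\{Ff\}$ for $f:\Delta\to\Gamma$, $G_\Gamma(\forall_S R)=\forall'_{\sigma_\Gamma(S)}(G_{\Gamma.S}R)$ and $G_\Gamma(\exists_S R)=\exists'_{\sigma_\Gamma(S)}(G_{\Gamma.S}R)$. Logic: predicate symbols from a set $P$ disjoint from $F\cup T$; a predicate declaration is $(\Gamma,\bar i,R)$ with ($\Gamma$ context)$\in\mathcal J(\Sigma)$, $\bar i$ determining, $R\in P$ (written $(\Gamma,R)$ on standard form); a predicate signature $\Pi$ declares each symbol at most once. $\mathrm{Form}(\Sigma,\Pi)$ is the smallest set of judgements ''$\phi$ form $(\Gamma)$'' with: $R(\bar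 a_{\bar i})$ form $(\Delta)$ for $(\Gamma,\bar i,R)\in\Pi$ and $\bar a:\Delta\to\Gamma$ in $\mathcal J(\Sigma)$; $\bot,\top$ form $(\Gamma)$ for contexts $\Gamma$; $(\phi\circ\psi)$ form $(\Gamma)$ for $\circ\in\{\wedge,\vee,\to\}$ from $\phi,\psi$ form $(\Gamma)$; $(Qx:A)\phi$ form $(\Gamma)$ for $Q\in\{\forall,\exists\}$ from $\phi$ form $(\Gamma,x:A)$ (with $(A\text{ type }(\Gamma))\in\mathcal J(\Sigma)$). Capture-avoiding substitution for $\bar a:\Delta\to\Gamma$: $\phi\{(\Delta,\Gamma,\bar a)\}=\phi[\bar a/\Gamma]$ for atomic $\phi$; it commutes with $\top,\bot,\wedge,\vee,\to$; and $((Qx:A)\theta)\{(\Delta,\Gamma,\bar a)\}=(Qy:A[\bar a/\Gamma])\,\theta\{(\langle\Delta,y:A[\bar a/\Gamma]\rangle,\langle\Gamma,x:A\rangle,(\bar a,y))\}$ with $y=\mathrm{fresh}(\Delta)$. A sequent is $\phi\Rightarrow_\Gamma\psi$ with $\phi,\psi$ form $(\Gamma)$; a theory is a set of sequents. Write $\mathbf p_\Gamma(x:A)=(\langle\Gamma,x:A\rangle,\Gamma,\mathrm{OV}(\Gamma))$. $\mathrm{Thm}(\Sigma,\Pi,T)$ is the smallest set of sequents containing $T$ and closed under: $\phi\Rightarrow_\Gamma\phi$; cut; $\theta\wedge\psi\Rightarrow_\Gamma\theta$, $\theta\wedge\psi\Rightarrow_\Gamma\psi$, from $\phi\Rightarrow_\Gamma\theta$,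 $\phi\Rightarrow_\Gamma\psi$ infer $\phi\Rightarrow_\Gamma\theta\wedge\psi$, $\phi\Rightarrow_\Gamma\top$; $\theta\Rightarrow_\Gamma\theta\vee\psi$, $\psi\Rightarrow_\Gamma\theta\vee\psi$, from $\theta\Rightarrow_\Gamma\phi$, $\psi\Rightarrow_\Gamma\phi$ infer $\theta\vee\psi\Rightarrow_\Gamma\phi$, $\bot\Rightarrow_\Gamma\phi$; $\theta\wedge\psi\Rightarrow_\Gamma\phi$ iff $\theta\Rightarrow_\Gamma\psi\to\phi$; $\phi\{\mathbf p_\Gamma(x:A)\}\Rightarrow_{\Gamma,x:A}\psi$ iff $\phi\Rightarrow_\Gamma(\forall x:A)\psi$; $\psi\Rightarrow_{\Gamma,x:A}\phi\{\mathbf p_\Gamma(x:A)\}$ iff $(\exists x:A)\psi\Rightarrow_\Gamma\phi$ (each ''iff'' read as two rules); and substitution: from $\phi\Rightarrow_\Gamma\psi$ and $\bar a:\Delta\to\Gamma$ infer $\phi\{(\Delta,\Gamma,\bar a)\}\Rightarrow_\Delta\psi\{(\Delta,\Gamma,\bar a)\}$. Lindenbaum–Tarski hyperdoctrine $\mathcal H_{\Sigma,\Pi,T}=(\mathcal F_\Sigma,\mathrm{Pr}_{\Sigma,\Pi,T},\forall,\exists)$: $\mathrm{Pr}_{\Sigma,\Pi,T}(\Gamma)=\{(\Gamma,\phi):(\phi\text{ form }(\Gamma))\in\mathrm{Form}(\Sigma,\Pi)\}$ ordered by $(\Gamma,\phi)\le(\Gamma,\psi)$ iff $(\phi\Rightarrow_\Gamma\psi)\in\mathrm{Thm}(\Sigma,\Pi,T)$,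 Heyting operations given by the connectives; $\mathrm{Pr}((\Delta,\Gamma,\bar a))(\Gamma,\phi)=(\Delta,\phi\{(\Delta,\Gamma,\bar a)\})$; $\forall_{(\Gamma,A)}(\langle\Gamma,x:A\rangle,\psi)=(\Gamma,(\forall x:A)\psi)$, $\exists_{(\Gamma,A)}(\langle\Gamma,x:A\rangle,\psi)=(\Gamma,(\exists x:A)\psi)$. $\mathcal H_{\Sigma,\Pi,\emptyset}$ is the case $T=\emptyset$; its underlying sets $\mathrm{Pr}(\Gamma)$ coincide with those of $\mathcal H_{\Sigma,\Pi,T}$. *)

From Stdlib Require Import List Arith Lia PeanoNat.
Import ListNotations.
Unset Implicit Arguments.

(* De Bruijn:
   phi(X) = {fr(X)}, so "x in Fresh(Gamma)" is "x = fresh Gamma". *)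
Record VarSys : Type := {
  var : Type;
  var_eq_dec : forall x y : var, {x = y} + {x <> y};
  fr : list var -> var;
  fr_fresh : forall X, ~ In (fr X) X;
  fr_ext : forall X Y, (forall v, In v X <-> In v Y) -> fr X = fr Y }.

Record Cwf : Type := {
  Ob : Type;
  Hom : Ob -> Ob -> Type;
  comp : forall Th D G : Ob, Hom D G -> Hom Th D -> Hom Th G;
  idm : forall G : Ob, Hom G G;
  term : Ob;
  bang : forall G : Ob, Hom G term;
  Ty : Ob -> Type;
  tsub : forall D G : Ob, Ty G -> Hom D G -> Ty D;
  Tm : forall G : Ob, Ty G -> Type;
  msub : forall (D G : Ob) (A : Ty G), Tm G A -> forall f : Hom D G, Tm D (tsub D G A f);
  ext : forall G : Ob, Ty G -> Ob;
  pp : forall (G : Ob) (A : Ty G), Hom (ext G A) G;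
  vv : forall (G : Ob) (A : Ty G), Tm (ext G A) (tsub (ext G A) G A (pp G A));
  pair : forall (D G : Ob) (A : Ty G) (f : Hom D G), Tm D (tsub D G A f) -> Hom D (ext G A) }.

Arguments Hom {c} _ _.
Arguments comp {c Th D G} _ _.
Arguments idm {c} G.
Arguments bang {c} G.
Arguments Ty {c} G.
Arguments tsub {c D G} A f.
Arguments Tm {c} G A.
Arguments msub {c D G A} a f.
Arguments ext {c} G A.
Arguments pp {c G} A.
Arguments vv {c G} A.
Arguments pair {c D G} A f a.

(* heterogeneous equality of terms / morphisms, via dependent pairs *)
Definition pkTm {C : Cwf} {G : Ob C} {A : Ty G} (a : Tm G A) : {X : Ob C & {B : Ty X & Tm X B}} :=
  existT _ G (existT _ A a).
Definition pkHom {C : Cwf} {X Y : Ob C} (f : Hom X Y) : {X : Ob C & {Y : Ob C & Hom X Y}} :=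
  existT _ X (existT _ Y f).

Record is_cwf (C : Cwf) : Prop := {
  cwf_assoc : forall (X Y Z W : Ob C) (h : Hom Z W) (g : Hom Y Z) (f : Hom X Y),
      comp h (comp g f) = comp (comp h g) f;
  cwf_idl : forall (X Y : Ob C) (f : Hom X Y), comp (idm Y) f = f;
  cwf_idr : forall (X Y : Ob C) (f : Hom X Y), comp f (idm X) = f;
  cwf_term : forall (X : Ob C) (f : Hom X (term C)), f = bang X;
  cwf_tsub_id : forall (G : Ob C) (A : Ty G), tsub A (idm G) = A;
  cwf_tsub_comp : forall (Th D G : Ob C) (A : Ty G) (f : Hom D G) (g : Hom Th D),
      tsub A (comp f g) = tsub (tsub A f) g;
  cwf_msub_id : forall (G : Ob C) (A : Ty G) (a : Tm G A), pkTm (msub a (idm G)) = pkTm a;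
  cwf_msub_comp : forall (Th D G : Ob C) (A : Ty G) (a : Tm G A) (f : Hom D G) (g : Hom Th D),
      pkTm (msub a (comp f g)) = pkTm (msub (msub a f) g);
  cwf_p_pair : forall (D G : Ob C) (A : Ty G) (f : Hom D G) (a : Tm D (tsub A f)),
      comp (pp A) (pair A f a) = f;
  cwf_v_pair : forall (D G : Ob C) (A : Ty G) (f : Hom D G) (a : Tm D (tsub A f)),
      pkTm (msub (vv A) (pair A f a)) = pkTm a;
  cwf_pair_eta : forall (D G : Ob C) (A : Ty G) (h : Hom D (ext G A)),
      pair A (comp (pp A) h)
        (eq_rect _ (Tm D) (msub (vv A) h) _ (eq_sym (cwf_tsub_comp _ _ _ A (pp A) h))) = h;
  cwf_pair_comp : forall (Th D G : Ob C) (A : Ty G) (f : Hom D G) (a : Tm D (tsub A f)) (g : Hom Th D),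
      comp (pair A f a) g =
      pair A (comp f g) (eq_rect _ (Tm Th) (msub a g) _ (eq_sym (cwf_tsub_comp _ _ _ A f g))) }.

Definition qmor {C : Cwf} (HC : is_cwf C) {D G : Ob C} (f : Hom D G) (A : Ty G) :
  Hom (ext D (tsub A f)) (ext G A) :=
  pair A (comp f (pp (tsub A f)))
    (eq_rect _ (Tm (ext D (tsub A f))) (vv (tsub A f)) _
       (eq_sym (cwf_tsub_comp C HC _ _ _ A f (pp (tsub A f))))).

Record CwfMor (C C' : Cwf) : Type := {
  Fob : Ob C -> Ob C';
  Fmor : forall D G : Ob C, Hom D G -> Hom (Fob D) (Fob G);
  Fty : forall G : Ob C, Ty G -> Ty (Fob G);
  Ftm : forall (G : Ob C) (A : Ty G), Tm G A -> Tm (Fob G) (Fty G A) }.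

Arguments Fob {C C'} _ G.
Arguments Fmor {C C'} _ {D G} _.
Arguments Fty {C C'} _ {G} A.
Arguments Ftm {C C'} _ {G A} a.

Record is_cwf_morphism {C C' : Cwf} (F : CwfMor C C') : Prop := {
  cm_comp : forall (Th D G : Ob C) (f : Hom D G) (g : Hom Th D),
      Fmor F (comp f g) = comp (Fmor F f) (Fmor F g);
  cm_id : forall G : Ob C, Fmor F (idm G) = idm (Fob F G);
  cm_term : forall X : Ob C', inhabited (Hom X (Fob F (term C))) /\
      (forall f g : Hom X (Fob F (term C)), f = g);
  cm_tsub : forall (D G : Ob C) (A : Ty G) (f : Hom D G), Fty F (tsub A f) = tsub (Fty F A) (Fmor F f);
  cm_msub : forall (D G : Ob C) (A : Ty G) (a : Tm G A) (f : Hom D G),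
      pkTm (Ftm F (msub a f)) = pkTm (msub (Ftm F a) (Fmor F f));
  cm_ext : forall (G : Ob C) (A : Ty G), Fob F (ext G A) = ext (Fob F G) (Fty F A);
  cm_p : forall (G : Ob C) (A : Ty G), pkHom (Fmor F (pp A)) = pkHom (pp (Fty F A));
  cm_v : forall (G : Ob C) (A : Ty G), pkTm (Ftm F (vv A)) = pkTm (vv (Fty F A));
  cm_pair : forall (D G : Ob C) (A : Ty G) (f : Hom D G) (a : Tm D (tsub A f)),
      pkHom (Fmor F (pair A f a)) =
      pkHom (pair (Fty F A) (Fmor F f) (eq_rect _ (Tm (Fob F D)) (Ftm F a) _ (cm_tsub D G A f))) }.

Record HOps (X : Type) : Type := {
  hle : X -> X -> Prop;
  htop : X; hbot : X;
  hmeet : X -> X -> X; hjoin : X -> X -> X; himp : X -> X -> X }.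
Arguments hle {X} _ _ _.
Arguments htop {X} _.
Arguments hbot {X} _.
Arguments hmeet {X} _ _ _.
Arguments hjoin {X} _ _ _.
Arguments himp {X} _ _ _.

Record is_heyting {X : Type} (H : HOps X) : Prop := {
  h_refl : forall x, hle H x x;
  h_trans : forall x y z, hle H x y -> hle H y z -> hle H x z;
  h_bot : forall x, hle H (hbot H) x;
  h_top : forall x, hle H x (htop H);
  h_meet : forall x y z, hle H z (hmeet H x y) <-> (hle H z x /\ hle H z y);
  h_join : forall x y z, hle H (hjoin H x y) z <-> (hle H x z /\ hle H y z);
  h_imp : forall x y z, hle H z (himp H x y) <-> hle H (hmeet H z x) y }.

Record is_heyting_mor {X Y : Type} (H : HOps X) (K : HOps Y) (g : X -> Y) : Prop := {
  hm_mono : forall x y, hle H x y -> hle K (g x) (g y);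
  hm_top : g (htop H) = htop K;
  hm_bot : g (hbot H) = hbot K;
  hm_meet : forall x y, g (hmeet H x y) = hmeet K (g x) (g y);
  hm_join : forall x y, g (hjoin H x y) = hjoin K (g x) (g y);
  hm_imp : forall x y, g (himp H x y) = himp K (g x) (g y) }.

Record HD (C : Cwf) : Type := {
  Pr : Ob C -> Type;
  hops : forall G : Ob C, HOps (Pr G);
  prsub : forall D G : Ob C, Hom D G -> Pr G -> Pr D;
  hall : forall (G : Ob C) (S : Ty G), Pr (ext G S) -> Pr G;
  hex : forall (G : Ob C) (S : Ty G), Pr (ext G S) -> Pr G }.
Arguments Pr {C} _ _.
Arguments hops {C} _ G.
Arguments prsub {C} _ {D G} f R.
Arguments hall {C} _ {G} S R.
Arguments hex {C} _ {G} S R.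

Record is_hyperdoctrine {C : Cwf} (HC : is_cwf C) (P : HD C) : Prop := {
  hd_heyting : forall G : Ob C, is_heyting (hops P G);
  hd_sub_mor : forall (D G : Ob C) (f : Hom D G), is_heyting_mor (hops P G) (hops P D) (prsub P f);
  hd_sub_id : forall (G : Ob C) (R : Pr P G), prsub P (idm G) R = R;
  hd_sub_comp : forall (Th D G : Ob C) (f : Hom D G) (g : Hom Th D) (R : Pr P G),
      prsub P (comp f g) R = prsub P g (prsub P f R);
  hd_all_mono : forall (G : Ob C) (S : Ty G) (R R' : Pr P (ext G S)),
      hle (hops P (ext G S)) R R' -> hle (hops P G) (hall P S R) (hall P S R');
  hd_ex_mono : forall (G : Ob C) (S : Ty G) (R R' : Pr P (ext G S)),
      hle (hops P (ext G S)) R R' -> hle (hops P G) (hex P S R) (hex P S R');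
  hd_all_adj : forall (G : Ob C) (S : Ty G) (Q : Pr P G) (R : Pr P (ext G S)),
      hle (hops P G) Q (hall P S R) <-> hle (hops P (ext G S)) (prsub P (pp S) Q) R;
  hd_ex_adj : forall (G : Ob C) (S : Ty G) (Q : Pr P G) (R : Pr P (ext G S)),
      hle (hops P G) (hex P S R) Q <-> hle (hops P (ext G S)) R (prsub P (pp S) Q);
  hd_all_bc : forall (D G : Ob C) (f : Hom D G) (S : Ty G) (R : Pr P (ext G S)),
      prsub P f (hall P S R) = hall P (tsub S f) (prsub P (qmor HC f S) R);
  hd_ex_bc : forall (D G : Ob C) (f : Hom D G) (S : Ty G) (R : Pr P (ext G S)),
      prsub P f (hex P S R) = hex P (tsub S f) (prsub P (qmor HC f S) R) }.

Record is_hd_morphism {C C' : Cwf} {F : CwfMor C C'} (HF : is_cwf_morphism F)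
    (P : HD C) (Q : HD C') (G : forall X : Ob C, Pr P X -> Pr Q (Fob F X)) : Prop := {
  hdm_heyting : forall X : Ob C, is_heyting_mor (hops P X) (hops Q (Fob F X)) (G X);
  hdm_sub : forall (D X : Ob C) (f : Hom D X) (R : Pr P X),
      G D (prsub P f R) = prsub Q (Fmor F f) (G X R);
  hdm_all : forall (X : Ob C) (S : Ty X) (R : Pr P (ext X S)),
      G X (hall P S R) = hall Q (Fty F S) (eq_rect _ (Pr Q) (G _ R) _ (cm_ext F HF X S));
  hdm_ex : forall (X : Ob C) (S : Ty X) (R : Pr P (ext X S)),
      G X (hex P S R) = hex Q (Fty F S) (eq_rect _ (Pr Q) (G _ R) _ (cm_ext F HF X S)) }.

Section Syntax.
Context (VS : VarSys) (Fsym Tsym Psym : Type).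
Local Notation V := (var VS).

Inductive tm : Type := Var (x : V) | App (f : Fsym) (l : list tm).
Definition pty : Type := (Tsym * list tm)%type.
Definition ctx : Type := list (V * pty).

Fixpoint tsubst (s : V -> tm) (t : tm) : tm :=
  match t with Var x => s x | App f l => App f (map (tsubst s) l) end.
Fixpoint tvars (t : tm) : list V :=
  match t with Var x => [x] | App _ l => flat_map tvars l end.
Definition psubst (s : V -> tm) (A : pty) : pty := (fst A, map (tsubst s) (snd A)).
Definition pvars (A : pty) : list V := flat_map tvars (snd A).

Fixpoint sub_of (xs : list V) (ts : list tm) (v : V) : tm :=
  match xs, ts with
  | x :: xs', t :: ts' => if var_eq_dec VS v x then t else sub_of xs' ts' v
  | _, _ => Var v
  end.

Definition OV (G : ctx) : list V := map fst G.
Definition ctxvars (G : ctx) : list V := flat_map (fun p => fst p :: pvars (snd p)) G.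
Definition fresh (G : ctx) : V := fr VS (ctxvars G).

Fixpoint tm_ind' (P : tm -> Prop) (HV : forall x, P (Var x))
  (HA : forall f l, Forall P l -> P (App f l)) (t : tm) : P t :=
  match t with
  | Var x => HV x
  | App f l => HA f l ((fix go (l : list tm) : Forall P l :=
       match l with [] => @Forall_nil _ P | t :: l' => @Forall_cons _ P t l' (tm_ind' P HV HA t) (go l') end) l)
  end.

Lemma tsubst_ext s1 s2 t : (forall v, In v (tvars t) -> s1 v = s2 v) -> tsubst s1 t = tsubst s2 t.
Proof.
  induction t as [x|f l Hl] using tm_ind'; simpl; intros H.
  - apply H; auto.
  - f_equal. induction Hl; simpl; auto.
    simpl in H. f_equal.
    + apply H0; intros v Hv; apply H; apply in_or_app; auto.
    + apply IHHl; intros v Hv; apply H; apply in_or_app; auto.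
Qed.

Lemma tsubst_comp s1 s2 t : tsubst s2 (tsubst s1 t) = tsubst (fun v => tsubst s2 (s1 v)) t.
Proof.
  induction t as [x|f l Hl] using tm_ind'; simpl; auto.
  f_equal. rewrite map_map. induction Hl; simpl; f_equal; auto.
Qed.

Lemma tsubst_var t : tsubst Var t = t.
Proof.
  induction t as [x|f l Hl] using tm_ind'; simpl; auto.
  f_equal. induction Hl; simpl; f_equal; auto.
Qed.

Lemma psubst_ext s1 s2 A : (forall v, In v (pvars A) -> s1 v = s2 v) -> psubst s1 A = psubst s2 A.
Proof.
  destruct A as [S l]; unfold psubst, pvars; simpl; intros H; f_equal.
  induction l; simpl in *; auto. f_equal.
  - apply tsubst_ext; intros; apply H; apply in_or_app; auto.
  - apply IHl; intros; apply H; apply in_or_app; auto.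
Qed.

Lemma psubst_comp s1 s2 A : psubst s2 (psubst s1 A) = psubst (fun v => tsubst s2 (s1 v)) A.
Proof.
  destruct A as [S l]; unfold psubst; simpl; f_equal. rewrite map_map.
  apply map_ext; intros; apply tsubst_comp.
Qed.

Lemma psubst_var A : psubst Var A = A.
Proof.
  destruct A as [S l]; unfold psubst; simpl; f_equal.
  rewrite <- (map_id l) at 2. apply map_ext; apply tsubst_var.
Qed.

Lemma sub_of_map_var xs v : sub_of xs (map Var xs) v = Var v.
Proof. induction xs; simpl; auto. destruct (var_eq_dec VS v a); subst; auto. Qed.

Lemma sub_of_map g xs ts v : In v xs -> length ts = length xs ->
  sub_of xs (map g ts) v = g (sub_of xs ts v).
Proof.
  revert ts; induction xs; intros ts Hv Hl; [destruct Hv|].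
  destruct ts; simpl in Hl; [discriminate|]. simpl.
  destruct (var_eq_dec VS v a); auto.
  apply IHxs; auto. destruct Hv; [congruence|auto].
Qed.

Lemma sub_of_firstn k xs ts v : In v (firstn k xs) ->
  sub_of xs ts v = sub_of (firstn k xs) (firstn k ts) v.
Proof.
  revert xs ts; induction k; intros xs ts Hv; [destruct Hv|].
  destruct xs; [destruct Hv|]. destruct ts; simpl.
  - destruct (firstn k xs); auto.
  - destruct (var_eq_dec VS v v0); auto. apply IHk. destruct Hv; [congruence|auto].
Qed.

Lemma sub_of_nth xs ts i x a : NoDup xs -> nth_error xs i = Some x -> nth_error ts i = Some a ->
  sub_of xs ts x = a.
Proof.
  revert xs ts; induction i; intros xs ts Hnd Hx Ha; destruct xs; destruct ts; simpl in *; try discriminate.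
  - inversion Hx; inversion Ha; subst. destruct (var_eq_dec VS x x); congruence.
  - inversion Hnd; subst. destruct (var_eq_dec VS x v).
    + subst. exfalso. apply H1. eapply nth_error_In; eauto.
    + eauto.
Qed.

Lemma psubst_idsub xs A : psubst (sub_of xs (map Var xs)) A = A.
Proof.
  rewrite <- (psubst_var A) at 2. apply psubst_ext; intros; apply sub_of_map_var.
Qed.
Lemma tsubst_idsub xs t : tsubst (sub_of xs (map Var xs)) t = t.
Proof.
  rewrite <- (tsubst_var t) at 2. apply tsubst_ext; intros; apply sub_of_map_var.
Qed.

Lemma comp_sub_p s xs ts B : incl (pvars B) xs -> length ts = length xs ->
  psubst s (psubst (sub_of xs ts) B) = psubst (sub_of xs (map (tsubst s) ts)) B.
Proof.
  intros Hi Hl. rewrite psubst_comp. apply psubst_ext; intros v Hv.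
  rewrite sub_of_map; auto.
Qed.


Record Sig : Type := {
  tyDecl : Tsym -> option ctx;
  fnDecl : Fsym -> option (ctx * pty);
  fn_scope : forall f G U, fnDecl f = Some (G, U) -> incl (pvars U) (ctxvars G) }.

Inductive ctxJ (Sg : Sig) : ctx -> Prop :=
| R1 : ctxJ Sg []
| R2 : forall G A, ctxJ Sg G -> tyJ Sg G A -> ctxJ Sg (G ++ [(fresh G, A)])
with tyJ (Sg : Sig) : ctx -> pty -> Prop :=
| R4 : forall S Th D l, tyDecl Sg S = Some Th ->
    ctxJ Sg D -> ctxJ Sg Th -> length l = length Th ->
    (forall k x B a, nth_error Th k = Some (x, B) -> nth_error l k = Some a ->
       tmJ Sg D a (psubst (sub_of (firstn k (OV Th)) (firstn k l)) B)) ->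
    tyJ Sg D (S, l)
with tmJ (Sg : Sig) : ctx -> tm -> pty -> Prop :=
| R3 : forall G i x A, ctxJ Sg G -> nth_error G i = Some (x, A) -> tmJ Sg G (Var x) A
| R5 : forall f Th U D l, fnDecl Sg f = Some (Th, U) ->
    ctxJ Sg D -> ctxJ Sg Th -> length l = length Th ->
    (forall k x B a, nth_error Th k = Some (x, B) -> nth_error l k = Some a ->
       tmJ Sg D a (psubst (sub_of (firstn k (OV Th)) (firstn k l)) B)) ->
    tyJ Sg D (psubst (sub_of (OV Th) l) U) ->
    tmJ Sg D (App f l) (psubst (sub_of (OV Th) l) U).

Definition morph (Sg : Sig) (D G : ctx) (l : list tm) : Prop :=
  ctxJ Sg D /\ ctxJ Sg G /\ length l = length G /\
  (forall k x A a, nth_error G k = Some (x, A) -> nth_error l k = Some a ->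
     tmJ Sg D a (psubst (sub_of (firstn k (OV G)) (firstn k l)) A)).

Scheme ctxJ_mind := Induction for ctxJ Sort Prop
with tyJ_mind := Induction for tyJ Sort Prop
with tmJ_mind := Induction for tmJ Sort Prop.
Combined Scheme J_mind from ctxJ_mind, tyJ_mind, tmJ_mind.

Definition is_signature (Sg : Sig) : Prop :=
  (forall S G, tyDecl Sg S = Some G -> ctxJ Sg G) /\
  (forall f G U, fnDecl Sg f = Some (G, U) -> tyJ Sg G U).

Section Meta.
Variable Sg : Sig.

Lemma OV_app G H : OV (G ++ H) = OV G ++ OV H.
Proof. unfold OV; apply map_app. Qed.

Lemma firstn_app_le {A} k (l1 l2 : list A) : k <= length l1 -> firstn k (l1 ++ l2) = firstn k l1.
Proof. intros; rewrite firstn_app. replace (k - length l1) with 0 by lia. simpl; apply app_nil_r. Qed.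

Lemma firstn_app_len {A} (l1 l2 : list A) : firstn (length l1) (l1 ++ l2) = l1.
Proof. rewrite firstn_app_le; auto. apply firstn_all. Qed.

Lemma OV_length G : length (OV G) = length G.
Proof. unfold OV; apply length_map. Qed.

Lemma incl_firstn {A} k (l : list A) : incl (firstn k l) l.
Proof. intros v Hv; rewrite <- (firstn_skipn k l); apply in_or_app; auto. Qed.

Lemma nth_error_OV G k x A : nth_error G k = Some (x, A) -> nth_error (OV G) k = Some x.
Proof. intros H; unfold OV; rewrite nth_error_map, H; reflexivity. Qed.

Lemma OV_incl_ctxvars G : incl (OV G) (ctxvars G).
Proof.
  induction G as [|[x A] G IH]; simpl; intros v Hv; [destruct Hv|].
  destruct Hv; [left; auto|right; apply in_or_app; right; auto].
Qed.

Lemma in_flat_map_nth {B} (f : tm -> list B) l v :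
  In v (flat_map f l) -> exists k a, nth_error l k = Some a /\ In v (f a).
Proof.
  intros H; apply in_flat_map in H as [a [Ha Hv]].
  apply In_nth_error in Ha as [k Hk]; eauto.
Qed.

Lemma nth_error_same_len {A B} (l1 : list A) (l2 : list B) k a :
  length l1 = length l2 -> nth_error l1 k = Some a -> exists b, nth_error l2 k = Some b.
Proof.
  intros Hl Ha. destruct (nth_error l2 k) eqn:E; eauto.
  apply nth_error_None in E. assert (k < length l1) by (apply nth_error_Some; congruence). lia.
Qed.

Definition ctx_scoped (G : ctx) : Prop :=
  NoDup (OV G) /\
  forall k x A, nth_error G k = Some (x, A) -> incl (pvars A) (firstn k (OV G)).

Lemma scoping :
  (forall G, ctxJ Sg G -> ctx_scoped G) /\
  (forall G A, tyJ Sg G A -> incl (pvars A) (OV G)) /\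
  (forall G a A, tmJ Sg G a A -> incl (tvars a) (OV G) /\ incl (pvars A) (OV G)).
Proof.
  assert (Hlist : forall D Th l, length l = length Th ->
     (forall k x B a, nth_error Th k = Some (x, B) -> nth_error l k = Some a ->
        incl (tvars a) (OV D) /\ incl (pvars (psubst (sub_of (firstn k (OV Th)) (firstn k l)) B)) (OV D)) ->
     incl (flat_map tvars l) (OV D)).
  { intros D Th l Hl H v Hv. apply in_flat_map_nth in Hv as [k [a [Hk Hv]]].
    destruct (nth_error_same_len l Th k a Hl Hk) as [[x B] HB].
    exact (proj1 (H _ _ _ _ HB Hk) v Hv). }
  apply (J_mind Sg (fun G _ => ctx_scoped G)
                 (fun G A _ => incl (pvars A) (OV G))
                 (fun G a A _ => incl (tvars a) (OV G) /\ incl (pvars A) (OV G))).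
  - split. constructor. intros k x A H; destruct k; discriminate.
  - intros G A HG [Hnd Hsc] HA IHA. split.
    + rewrite OV_app. simpl. apply NoDup_app; auto.
      * repeat constructor; simpl; auto.
      * intros v Hv Hv'. destruct Hv' as [<-|[]].
        apply (fr_fresh VS (ctxvars G)). apply OV_incl_ctxvars; auto.
    + intros k x B Hk. rewrite OV_app.
      destruct (Nat.lt_ge_cases k (length G)) as [Hlt|Hge].
      * rewrite nth_error_app1 in Hk by auto. rewrite firstn_app_le by (rewrite OV_length; lia).
        eapply Hsc; eauto.
      * rewrite nth_error_app2 in Hk by auto. destruct (k - length G) eqn:E; [|destruct n; discriminate].
        simpl in Hk. inversion Hk; subst. replace k with (length (OV G)) by (rewrite OV_length; lia).
        rewrite firstn_app_len. auto.
  - intros S Th D l HS HD IHD HTh IHTh Hl Hc IHc. unfold pvars; simpl.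
    eapply Hlist; eauto.
  - intros G i x A HG [Hnd Hsc] Hi. split.
    + intros v [<-|[]]. eapply nth_error_In, nth_error_OV; eauto.
    + intros v Hv. eapply incl_firstn, Hsc; eauto.
  - intros f Th U D l Hf HD IHD HTh IHTh Hl Hc IHc HU IHU. split; auto.
    simpl. eapply Hlist; eauto.
Qed.

Lemma ctx_scoped_of G : ctxJ Sg G -> ctx_scoped G.
Proof. apply scoping. Qed.

Lemma ctxvars_incl G : ctxJ Sg G -> incl (ctxvars G) (OV G).
Proof.
  intros HG. destruct (ctx_scoped_of _ HG) as [_ Hsc]. intros v Hv.
  unfold ctxvars in Hv. apply in_flat_map in Hv as [[x A] [Hin Hv]].
  apply In_nth_error in Hin as [k Hk]. simpl in Hv. destruct Hv as [<-|Hv].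
  - eapply nth_error_In, nth_error_OV; eauto.
  - eapply incl_firstn, Hsc; eauto.
Qed.

Lemma comp_sub_scoped s xs ts B : incl (pvars B) xs -> length ts = length xs ->
  psubst s (psubst (sub_of xs ts) B) = psubst (sub_of xs (map (tsubst s) ts)) B.
Proof. apply comp_sub_p. Qed.

Lemma length_firstn_eq {A B} k (l1 : list A) (l2 : list B) :
  length l1 = length l2 -> length (firstn k l1) = length (firstn k l2).
Proof. intros; rewrite !length_firstn; lia. Qed.

Lemma subst_lemma :
  (forall G, ctxJ Sg G -> True) /\
  (forall G A, tyJ Sg G A -> forall D l, morph Sg D G l -> tyJ Sg D (psubst (sub_of (OV G) l) A)) /\
  (forall G a A, tmJ Sg G a A -> forall D l, morph Sg D G l ->
     tmJ Sg D (tsubst (sub_of (OV G) l) a) (psubst (sub_of (OV G) l) A)).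
Proof.
  assert (Hcomp : forall G Th l, ctxJ Sg Th -> length l = length Th ->
    (forall k x B a, nth_error Th k = Some (x, B) -> nth_error l k = Some a ->
       forall D m, morph Sg D G m ->
       tmJ Sg D (tsubst (sub_of (OV G) m) a)
         (psubst (sub_of (OV G) m) (psubst (sub_of (firstn k (OV Th)) (firstn k l)) B))) ->
    forall D m, morph Sg D G m ->
    forall k x B a, nth_error Th k = Some (x, B) -> nth_error (map (tsubst (sub_of (OV G) m)) l) k = Some a ->
       tmJ Sg D a (psubst (sub_of (firstn k (OV Th)) (firstn k (map (tsubst (sub_of (OV G) m)) l))) B)).
  { intros G Th l HTh Hl IH D m Hm k x B a Hk Ha.
    rewrite nth_error_map in Ha. destruct (nth_error l k) as [a0|] eqn:E; [|discriminate].
    simpl in Ha; inversion Ha; subst.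
    specialize (IH k x B a0 Hk E D m Hm).
    rewrite comp_sub_scoped in IH.
    - rewrite firstn_map; exact IH.
    - destruct (ctx_scoped_of _ HTh) as [_ Hsc]; eapply Hsc; eauto.
    - apply length_firstn_eq; rewrite OV_length; auto. }
  apply (J_mind Sg (fun G _ => True)
      (fun G A _ => forall D l, morph Sg D G l -> tyJ Sg D (psubst (sub_of (OV G) l) A))
      (fun G a A _ => forall D l, morph Sg D G l ->
         tmJ Sg D (tsubst (sub_of (OV G) l) a) (psubst (sub_of (OV G) l) A))); auto.
  - intros S Th G l HS HG _ HTh _ Hl Hc IHc D m Hm.
    assert (HD : ctxJ Sg D) by apply Hm.
    unfold psubst at 1; simpl. apply R4 with Th; auto.
    + rewrite length_map; auto.
    + eapply Hcomp; eauto.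
  - intros G i x A HG _ Hi D m Hm.
    destruct Hm as [HD [_ [Hl Hc]]].
    destruct (nth_error_same_len G m i (x, A) (eq_sym Hl) Hi) as [a Ha].
    destruct (ctx_scoped_of _ HG) as [Hnd Hsc].
    simpl. rewrite (sub_of_nth (OV G) m i x a Hnd (nth_error_OV _ _ _ _ Hi) Ha).
    rewrite (psubst_ext _ (sub_of (firstn i (OV G)) (firstn i m))).
    + eapply Hc; eauto.
    + intros v Hv. apply sub_of_firstn. eapply Hsc; eauto.
  - intros f Th U G l Hf HG _ HTh _ Hl Hc IHc HU IHU D m Hm.
    assert (HD : ctxJ Sg D) by apply Hm.
    assert (HUs : incl (pvars U) (OV Th)).
    { intros v Hv. apply ctxvars_incl; auto. eapply fn_scope; eauto. }
    assert (HlO : length l = length (OV Th)) by (rewrite OV_length; auto).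
    specialize (IHU D m Hm). simpl.
    rewrite comp_sub_scoped in IHU |- * by auto.
    apply R5; auto.
    + rewrite length_map; auto.
    + eapply Hcomp; eauto.
Qed.

Lemma subst_ty G A D l : tyJ Sg G A -> morph Sg D G l -> tyJ Sg D (psubst (sub_of (OV G) l) A).
Proof. intros; eapply subst_lemma; eauto. Qed.
Arguments subst_ty {G A D l}.


Lemma subst_tm G a A D l : tmJ Sg G a A -> morph Sg D G l ->
  tmJ Sg D (tsubst (sub_of (OV G) l) a) (psubst (sub_of (OV G) l) A).
Proof. intros; eapply subst_lemma; eauto. Qed.
Arguments subst_tm {G a A D l}.


Lemma ctx_snoc_inv G x A : ctxJ Sg (G ++ [(x, A)]) -> ctxJ Sg G /\ tyJ Sg G A /\ x = fresh G.
Proof.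
  intros H; inversion H.
  - destruct G; discriminate.
  - apply app_inj_tail in H0 as [-> He]. inversion He; subst; auto.
Qed.
Arguments ctx_snoc_inv {G x A}.


Lemma morph_comp T D G m l : morph Sg T D m -> morph Sg D G l ->
  morph Sg T G (map (tsubst (sub_of (OV D) m)) l).
Proof.
  intros Hm Hl. pose proof Hm as Hm'. destruct Hm as [HT [HD _]].
  destruct Hl as [_ [HG [Hlen Hc]]].
  split; auto. split; auto. split; [rewrite length_map; auto|].
  intros k x A a Hk Ha.
  rewrite nth_error_map in Ha. destruct (nth_error l k) as [a0|] eqn:E; [|discriminate].
  simpl in Ha; inversion Ha; subst.
  pose proof (subst_tm (Hc k x A a0 Hk E) Hm') as H.
  rewrite comp_sub_scoped in H.
  - rewrite firstn_map; exact H.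
  - destruct (ctx_scoped_of _ HG) as [_ Hsc]; eapply Hsc; eauto.
  - apply length_firstn_eq; rewrite OV_length; auto.
Qed.
Arguments morph_comp {T D G m l}.


Lemma morph_weak_id G H : ctxJ Sg (G ++ H) -> ctxJ Sg G -> morph Sg (G ++ H) G (map Var (OV G)).
Proof.
  intros HGH HG. split; auto. split; auto. split; [rewrite length_map, OV_length; auto|].
  intros k x A a Hk Ha. rewrite firstn_map, psubst_idsub.
  rewrite nth_error_map, (nth_error_OV _ _ _ _ Hk) in Ha. simpl in Ha; inversion Ha; subst.
  apply R3 with k; auto. rewrite nth_error_app1; auto.
  apply nth_error_Some; congruence.
Qed.
Arguments morph_weak_id {G H}.


Lemma morph_id G : ctxJ Sg G -> morph Sg G G (map Var (OV G)).
Proof. intros HG. pose proof (morph_weak_id (G:=G) (H:=[])). rewrite app_nil_r in H. auto. Qed.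

Lemma morph_p G x A : ctxJ Sg (G ++ [(x, A)]) -> morph Sg (G ++ [(x, A)]) G (map Var (OV G)).
Proof. intros H; apply morph_weak_id; auto. apply (ctx_snoc_inv H). Qed.
Arguments morph_p {G x A}.


Lemma weaken_tm D y B a A : ctxJ Sg (D ++ [(y, B)]) -> tmJ Sg D a A -> tmJ Sg (D ++ [(y, B)]) a A.
Proof.
  intros H Ha. pose proof (subst_tm Ha (morph_p H)). rewrite tsubst_idsub, psubst_idsub in H0; auto.
Qed.
Arguments weaken_tm {D y B a A}.


Lemma morph_weaken D y B G l : ctxJ Sg (D ++ [(y, B)]) -> morph Sg D G l -> morph Sg (D ++ [(y, B)]) G l.
Proof.
  intros H [HD [HG [Hl Hc]]]. split; auto. split; auto. split; auto.
  intros; apply weaken_tm; eauto.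
Qed.
Arguments morph_weaken {D y B G l}.


Lemma morph_snoc D G l x A b : morph Sg D G l -> ctxJ Sg (G ++ [(x, A)]) ->
  tmJ Sg D b (psubst (sub_of (OV G) l) A) -> morph Sg D (G ++ [(x, A)]) (l ++ [b]).
Proof.
  intros [HD [HG [Hl Hc]]] HGx Hb. split; auto. split; auto.
  split; [rewrite !length_app; simpl; lia|].
  intros k y B a Hk Ha. rewrite OV_app.
  destruct (Nat.lt_ge_cases k (length G)) as [Hlt|Hge].
  - rewrite nth_error_app1 in Hk by auto. rewrite nth_error_app1 in Ha by lia.
    rewrite !firstn_app_le by (rewrite ?OV_length; lia). eauto.
  - rewrite nth_error_app2 in Hk by auto. rewrite nth_error_app2 in Ha by lia.
    destruct (k - length G) eqn:E; [|destruct n; discriminate].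
    replace (k - length l) with 0 in Ha by lia.
    simpl in Hk, Ha. inversion Hk; inversion Ha; subst.
    assert (k = length G) by lia. subst k.
    rewrite !firstn_app_le by (rewrite ?OV_length; lia).
    rewrite !firstn_all2 by (rewrite ?OV_length; lia). auto.
Qed.
Arguments morph_snoc {D G l x A b}.


Lemma morph_empty D : ctxJ Sg D -> morph Sg D [] [].
Proof.
  intros HD; split; auto. split; [constructor|]. split; auto.
  intros k; destruct k; discriminate.
Qed.

End Meta.

Arguments subst_ty {Sg G A D l}.
Arguments subst_tm {Sg G a A D l}.
Arguments ctx_snoc_inv {Sg G x A}.
Arguments morph_comp {Sg T D G m l}.
Arguments morph_weak_id {Sg G H}.
Arguments morph_p {Sg G x A}.
Arguments weaken_tm {Sg D y B a A}.
Arguments morph_weaken {Sg D y B G l}.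
Arguments morph_snoc {Sg D G l x A b}.

(* a predicate signature on standard form: R |-> Gamma for the declaration (Gamma, R) *)
Definition PSig : Type := Psym -> option ctx.

Definition is_pred_sig (Sg : Sig) (Pi : PSig) : Prop :=
  forall R G, Pi R = Some G -> ctxJ Sg G.

Inductive fm : Type :=
| Atom (R : Psym) (l : list tm)
| FBot | FTop
| FAnd (p q : fm) | FOr (p q : fm) | FImp (p q : fm)
| FAll (x : V) (A : pty) (p : fm) | FEx (x : V) (A : pty) (p : fm).

Inductive formJ (Sg : Sig) (Pi : PSig) : ctx -> fm -> Prop :=
| FA_atom : forall R Th D l, Pi R = Some Th -> morph Sg D Th l -> formJ Sg Pi D (Atom R l)
| FA_bot : forall G, ctxJ Sg G -> formJ Sg Pi G FBot
| FA_top : forall G, ctxJ Sg G -> formJ Sg Pi G FTop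
| FA_and : forall G p q, formJ Sg Pi G p -> formJ Sg Pi G q -> formJ Sg Pi G (FAnd p q)
| FA_or : forall G p q, formJ Sg Pi G p -> formJ Sg Pi G q -> formJ Sg Pi G (FOr p q)
| FA_imp : forall G p q, formJ Sg Pi G p -> formJ Sg Pi G q -> formJ Sg Pi G (FImp p q)
| FA_all : forall G x A p, tyJ Sg G A -> formJ Sg Pi (G ++ [(x, A)]) p -> formJ Sg Pi G (FAll x A p)
| FA_ex : forall G x A p, tyJ Sg G A -> formJ Sg Pi (G ++ [(x, A)]) p -> formJ Sg Pi G (FEx x A p).

Fixpoint fsub (D G : ctx) (l : list tm) (p : fm) : fm :=
  match p with
  | Atom R m => Atom R (map (tsubst (sub_of (OV G) l)) m)
  | FBot => FBot
  | FTop => FTop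
  | FAnd p q => FAnd (fsub D G l p) (fsub D G l q)
  | FOr p q => FOr (fsub D G l p) (fsub D G l q)
  | FImp p q => FImp (fsub D G l p) (fsub D G l q)
  | FAll x A q =>
      FAll (fresh D) (psubst (sub_of (OV G) l) A)
        (fsub (D ++ [(fresh D, psubst (sub_of (OV G) l) A)]) (G ++ [(x, A)]) (l ++ [Var (fresh D)]) q)
  | FEx x A q =>
      FEx (fresh D) (psubst (sub_of (OV G) l) A)
        (fsub (D ++ [(fresh D, psubst (sub_of (OV G) l) A)]) (G ++ [(x, A)]) (l ++ [Var (fresh D)]) q)
  end.

Definition fweak (G : ctx) (x : V) (A : pty) (p : fm) : fm :=
  fsub (G ++ [(x, A)]) G (map Var (OV G)) p.

Definition is_theory (Sg : Sig) (Pi : PSig) (T : ctx -> fm -> fm -> Prop) : Prop :=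
  forall G p q, T G p q -> formJ Sg Pi G p /\ formJ Sg Pi G q.

(* Thm(Sigma, Pi, T): every rule carries as side conditions that its conclusion is a
   sequent (both sides formulas in the context). *)
Inductive Thm (Sg : Sig) (Pi : PSig) (T : ctx -> fm -> fm -> Prop) : ctx -> fm -> fm -> Prop :=
| th_ax : forall G p q, T G p q -> Thm Sg Pi T G p q
| th_id : forall G p, formJ Sg Pi G p -> Thm Sg Pi T G p p
| th_cut : forall G p r q, formJ Sg Pi G p -> formJ Sg Pi G q ->
    Thm Sg Pi T G p r -> Thm Sg Pi T G r q -> Thm Sg Pi T G p q
| th_andE1 : forall G r q, formJ Sg Pi G (FAnd r q) -> formJ Sg Pi G r -> Thm Sg Pi T G (FAnd r q) r
| th_andE2 : forall G r q, formJ Sg Pi G (FAnd r q) -> formJ Sg Pi G q -> Thm Sg Pi T G (FAnd r q) q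
| th_andI : forall G p r q, formJ Sg Pi G p -> formJ Sg Pi G (FAnd r q) ->
    Thm Sg Pi T G p r -> Thm Sg Pi T G p q -> Thm Sg Pi T G p (FAnd r q)
| th_top : forall G p, formJ Sg Pi G p -> formJ Sg Pi G FTop -> Thm Sg Pi T G p FTop
| th_orI1 : forall G r q, formJ Sg Pi G r -> formJ Sg Pi G (FOr r q) -> Thm Sg Pi T G r (FOr r q)
| th_orI2 : forall G r q, formJ Sg Pi G q -> formJ Sg Pi G (FOr r q) -> Thm Sg Pi T G q (FOr r q)
| th_orE : forall G r q p, formJ Sg Pi G (FOr r q) -> formJ Sg Pi G p ->
    Thm Sg Pi T G r p -> Thm Sg Pi T G q p -> Thm Sg Pi T G (FOr r q) p
| th_bot : forall G p, formJ Sg Pi G FBot -> formJ Sg Pi G p -> Thm Sg Pi T G FBot p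
| th_impI : forall G r q p, formJ Sg Pi G r -> formJ Sg Pi G (FImp q p) ->
    Thm Sg Pi T G (FAnd r q) p -> Thm Sg Pi T G r (FImp q p)
| th_impE : forall G r q p, formJ Sg Pi G (FAnd r q) -> formJ Sg Pi G p ->
    Thm Sg Pi T G r (FImp q p) -> Thm Sg Pi T G (FAnd r q) p
| th_allI : forall G x A p q, formJ Sg Pi G p -> formJ Sg Pi G (FAll x A q) ->
    Thm Sg Pi T (G ++ [(x, A)]) (fweak G x A p) q -> Thm Sg Pi T G p (FAll x A q)
| th_allE : forall G x A p q, formJ Sg Pi (G ++ [(x, A)]) (fweak G x A p) ->
    formJ Sg Pi (G ++ [(x, A)]) q ->
    Thm Sg Pi T G p (FAll x A q) -> Thm Sg Pi T (G ++ [(x, A)]) (fweak G x A p) q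
| th_exE : forall G x A q p, formJ Sg Pi G (FEx x A q) -> formJ Sg Pi G p ->
    Thm Sg Pi T (G ++ [(x, A)]) q (fweak G x A p) -> Thm Sg Pi T G (FEx x A q) p
| th_exI : forall G x A q p, formJ Sg Pi (G ++ [(x, A)]) q ->
    formJ Sg Pi (G ++ [(x, A)]) (fweak G x A p) ->
    Thm Sg Pi T G (FEx x A q) p -> Thm Sg Pi T (G ++ [(x, A)]) q (fweak G x A p)
| th_sub : forall G D l p q, morph Sg D G l ->
    formJ Sg Pi D (fsub D G l p) -> formJ Sg Pi D (fsub D G l q) ->
    Thm Sg Pi T G p q -> Thm Sg Pi T D (fsub D G l p) (fsub D G l q).

Section FormMeta.
Variable Sg : Sig.
Variable Pi : PSig.

Lemma formJ_ctx G p : formJ Sg Pi G p -> ctxJ Sg G.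
Proof.
  induction 1; auto.
  - apply H0.
  - apply (ctx_snoc_inv IHformJ).
  - apply (ctx_snoc_inv IHformJ).
Qed.

Lemma fsub_formJ G p : formJ Sg Pi G p -> forall D l, morph Sg D G l -> formJ Sg Pi D (fsub D G l p).
Proof.
  assert (Hq : forall G x A p D l, tyJ Sg G A -> formJ Sg Pi (G ++ [(x, A)]) p ->
     (forall D l, morph Sg (D) (G ++ [(x, A)]) l -> formJ Sg Pi D (fsub D (G ++ [(x, A)]) l p)) ->
     morph Sg D G l ->
     tyJ Sg D (psubst (sub_of (OV G) l) A) /\
     formJ Sg Pi (D ++ [(fresh D, psubst (sub_of (OV G) l) A)])
        (fsub (D ++ [(fresh D, psubst (sub_of (OV G) l) A)]) (G ++ [(x, A)]) (l ++ [Var (fresh D)]) p)).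
  { clear G p. intros G x A p D l HA Hp IH Hm.
    assert (HAs : tyJ Sg D (psubst (sub_of (OV G) l) A)) by (eapply subst_ty; eauto).
    assert (HD : ctxJ Sg D) by apply Hm.
    assert (HD' := R2 Sg D _ HD HAs).
    split; auto. apply IH. apply morph_snoc.
    - apply morph_weaken; auto.
    - eapply formJ_ctx; eauto.
    - apply R3 with (length D); auto. rewrite nth_error_app2, Nat.sub_diag by lia. reflexivity. }
  induction 1; intros D0 m Hm; simpl.
  - econstructor; eauto. eapply morph_comp; eauto.
  - constructor; apply Hm.
  - constructor; apply Hm.
  - constructor; auto.
  - constructor; auto.
  - constructor; auto.
  - destruct (Hq G x A p D0 m H H0 IHformJ Hm). constructor; auto.
  - destruct (Hq G x A p D0 m H H0 IHformJ Hm). constructor; auto.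
Qed.

End FormMeta.

Section FSigma.
Variable Sg : Sig.

Definition FOb : Type := {G : ctx | ctxJ Sg G}.
Definition FHom (D G : FOb) : Type := {l : list tm | morph Sg (proj1_sig D) (proj1_sig G) l}.
Definition FTy (G : FOb) : Type := {A : pty | tyJ Sg (proj1_sig G) A}.
Definition FTm (G : FOb) (A : FTy G) : Type := {a : tm | tmJ Sg (proj1_sig G) a (proj1_sig A)}.

Definition Fcomp (Th D G : FOb) (g : FHom D G) (f : FHom Th D) : FHom Th G :=
  exist _ (map (tsubst (sub_of (OV (proj1_sig D)) (proj1_sig f))) (proj1_sig g))
    (morph_comp (proj2_sig f) (proj2_sig g)).

Definition Fid (G : FOb) : FHom G G :=
  exist _ (map Var (OV (proj1_sig G))) (morph_id Sg _ (proj2_sig G)).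

Definition Fterm : FOb := exist _ [] (R1 Sg).
Definition Fbang (G : FOb) : FHom G Fterm := exist _ [] (morph_empty Sg _ (proj2_sig G)).

Definition Ftsub (D G : FOb) (A : FTy G) (f : FHom D G) : FTy D :=
  exist _ (psubst (sub_of (OV (proj1_sig G)) (proj1_sig f)) (proj1_sig A))
    (subst_ty (proj2_sig A) (proj2_sig f)).

Definition Fmsub (D G : FOb) (A : FTy G) (a : FTm G A) (f : FHom D G) : FTm D (Ftsub D G A f) :=
  exist _ (tsubst (sub_of (OV (proj1_sig G)) (proj1_sig f)) (proj1_sig a))
    (subst_tm (proj2_sig a) (proj2_sig f)).

Definition Fext (G : FOb) (A : FTy G) : FOb :=
  exist _ (proj1_sig G ++ [(fresh (proj1_sig G), proj1_sig A)])
    (R2 Sg _ _ (proj2_sig G) (proj2_sig A)).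

Definition Fpp (G : FOb) (A : FTy G) : FHom (Fext G A) G :=
  exist _ (map Var (OV (proj1_sig G))) (morph_p (proj2_sig (Fext G A))).

Lemma Fvv_ok (G : FOb) (A : FTy G) :
  tmJ Sg (proj1_sig G ++ [(fresh (proj1_sig G), proj1_sig A)]) (Var (fresh (proj1_sig G)))
    (psubst (sub_of (OV (proj1_sig G)) (map Var (OV (proj1_sig G)))) (proj1_sig A)).
Proof.
  rewrite psubst_idsub. apply R3 with (length (proj1_sig G)).
  - exact (proj2_sig (Fext G A)).
  - rewrite nth_error_app2, Nat.sub_diag by lia. reflexivity.
Qed.

Definition Fvv (G : FOb) (A : FTy G) : FTm (Fext G A) (Ftsub (Fext G A) G A (Fpp G A)) :=
  exist _ (Var (fresh (proj1_sig G))) (Fvv_ok G A).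

Definition Fpair (D G : FOb) (A : FTy G) (f : FHom D G) (a : FTm D (Ftsub D G A f)) : FHom D (Fext G A) :=
  exist _ (proj1_sig f ++ [proj1_sig a])
    (morph_snoc (proj2_sig f) (proj2_sig (Fext G A)) (proj2_sig a)).

Definition FSig : Cwf :=
  {| Ob := FOb; Hom := FHom; comp := Fcomp; idm := Fid; term := Fterm; bang := Fbang;
     Ty := FTy; tsub := Ftsub; Tm := FTm; msub := Fmsub; ext := Fext; pp := Fpp; vv := Fvv;
     pair := Fpair |}.

End FSigma.

Section LTH.
Variable Sg : Sig.
Variable Pi : PSig.
Variable T : ctx -> fm -> fm -> Prop.

Definition LPr (G : FOb Sg) : Type := {p : fm | formJ Sg Pi (proj1_sig G) p}.

Definition Lops (G : FOb Sg) : HOps (LPr G) :=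
  {| hle := fun p q => Thm Sg Pi T (proj1_sig G) (proj1_sig p) (proj1_sig q);
     htop := exist _ FTop (FA_top Sg Pi _ (proj2_sig G));
     hbot := exist _ FBot (FA_bot Sg Pi _ (proj2_sig G));
     hmeet := fun p q => exist _ (FAnd (proj1_sig p) (proj1_sig q)) (FA_and Sg Pi _ _ _ (proj2_sig p) (proj2_sig q));
     hjoin := fun p q => exist _ (FOr (proj1_sig p) (proj1_sig q)) (FA_or Sg Pi _ _ _ (proj2_sig p) (proj2_sig q));
     himp := fun p q => exist _ (FImp (proj1_sig p) (proj1_sig q)) (FA_imp Sg Pi _ _ _ (proj2_sig p) (proj2_sig q)) |}.

Definition Lsub (D G : FOb Sg) (f : FHom Sg D G) (p : LPr G) : LPr D :=
  exist _ (fsub (proj1_sig D) (proj1_sig G) (proj1_sig f) (proj1_sig p))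
    (fsub_formJ Sg Pi _ _ (proj2_sig p) _ _ (proj2_sig f)).

Definition Lall (G : FOb Sg) (S : FTy Sg G) (R : LPr (Fext Sg G S)) : LPr G :=
  exist _ (FAll (fresh (proj1_sig G)) (proj1_sig S) (proj1_sig R))
    (FA_all Sg Pi _ _ _ _ (proj2_sig S) (proj2_sig R)).

Definition Lex (G : FOb Sg) (S : FTy Sg G) (R : LPr (Fext Sg G S)) : LPr G :=
  exist _ (FEx (fresh (proj1_sig G)) (proj1_sig S) (proj1_sig R))
    (FA_ex Sg Pi _ _ _ _ (proj2_sig S) (proj2_sig R)).

Definition LT : HD (FSig Sg) :=
  @Build_HD (FSig Sg) LPr Lops Lsub Lall Lex.

End LTH.

Definition emptyT : ctx -> fm -> fm -> Prop := fun _ _ _ => False.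

End Syntax.

Arguments is_signature {VS Fsym Tsym} Sg.
Arguments is_pred_sig {VS Fsym Tsym Psym} Sg Pi.
Arguments FSig {VS Fsym Tsym} Sg.
Arguments LT {VS Fsym Tsym Psym} Sg Pi T.
Arguments emptyT {VS Fsym Tsym Psym} _ _ _.
Arguments formJ {VS Fsym Tsym Psym} Sg Pi _ _.
Arguments Thm {VS Fsym Tsym Psym} Sg Pi T _ _ _.
Arguments is_theory {VS Fsym Tsym Psym} Sg Pi T.

(* G is a Heyting morphism on
   every fibre and commutes with substitution and the quantifiers, so each propositional rule
   becomes the corresponding Heyting (pre)algebra law in D, the quantifier rules become the
   adjunctions ∃ ⊣ p* ⊣ ∀ of D transported along F, and the substitution rule becomes
   monotonicity of reindexing in D; the axioms of T hold by hypothesis.  Since the fibres of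
   H_{Σ,Π,T} differ from those of H_{Σ,Π,∅} only in their order, soundness is exactly the missing
   monotonicity for G to be a morphism out of H_{Σ,Π,T}. *)

From Stdlib Require Import List ProofIrrelevance Eqdep.
Import ListNotations.

#[local] Arguments ctx_snoc_inv {VS Fsym Tsym Sg G x A}.
#[local] Arguments formJ_ctx {VS Fsym Tsym Psym Sg Pi G p}.
#[local] Arguments FA_and {VS Fsym Tsym Psym Sg Pi G p q}.
#[local] Arguments FA_imp {VS Fsym Tsym Psym Sg Pi G p q}.
#[local] Arguments FBot {VS Fsym Tsym Psym}.
#[local] Arguments FTop {VS Fsym Tsym Psym}.
#[local] Arguments FAnd {VS Fsym Tsym Psym}.
#[local] Arguments FOr {VS Fsym Tsym Psym}.
#[local] Arguments FImp {VS Fsym Tsym Psym}.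
#[local] Arguments FAll {VS Fsym Tsym Psym}.
#[local] Arguments FEx {VS Fsym Tsym Psym}.
#[local] Arguments fsub {VS Fsym Tsym Psym}.
#[local] Arguments fweak {VS Fsym Tsym Psym}.
#[local] Arguments fresh {VS Fsym Tsym}.

Section TransportedAdjunctions.

Lemma prsub_pkHom {C : Cwf} (P : HD C) (Y Y' Z : Ob C) (E : Y = Y')
    (f : Hom Y Z) (f' : Hom Y' Z) (a : Pr P Z) :
  pkHom f = pkHom f' -> prsub P f' a = eq_rect _ (Pr P) (prsub P f a) _ E.
Proof.
  destruct E; unfold pkHom; intros Hf.
  apply inj_pair2 in Hf; apply inj_pair2 in Hf; subst; reflexivity.
Qed.

Lemma hle_eq_rect {C : Cwf} (P : HD C) (Y Y' : Ob C) (E : Y = Y') (a b : Pr P Y) :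
  hle (hops P Y') (eq_rect _ (Pr P) a _ E) (eq_rect _ (Pr P) b _ E) <-> hle (hops P Y) a b.
Proof. destruct E; reflexivity. Qed.

Context {C0 C : Cwf} {HC : is_cwf C} {F : CwfMor C0 C} (HF : is_cwf_morphism F).
Context {D : HD C} (HD : is_hyperdoctrine HC D).

Lemma hall_adj_along (X : Ob C0) (S : Ty X) (Q : Pr D (Fob F X)) (R : Pr D (Fob F (ext X S))) :
  hle (hops D (Fob F X)) Q (hall D (Fty F S) (eq_rect _ (Pr D) R _ (cm_ext F HF X S))) <->
  hle (hops D (Fob F (ext X S))) (prsub D (Fmor F (pp S)) Q) R.
Proof.
  rewrite (hd_all_adj HC D HD), (prsub_pkHom D _ _ _ (cm_ext F HF X S) _ _ Q (cm_p F HF X S)).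
  apply hle_eq_rect.
Qed.

Lemma hex_adj_along (X : Ob C0) (S : Ty X) (Q : Pr D (Fob F X)) (R : Pr D (Fob F (ext X S))) :
  hle (hops D (Fob F X)) (hex D (Fty F S) (eq_rect _ (Pr D) R _ (cm_ext F HF X S))) Q <->
  hle (hops D (Fob F (ext X S))) R (prsub D (Fmor F (pp S)) Q).
Proof.
  rewrite (hd_ex_adj HC D HD), (prsub_pkHom D _ _ _ (cm_ext F HF X S) _ _ Q (cm_p F HF X S)).
  apply hle_eq_rect.
Qed.

End TransportedAdjunctions.

Section HeytingPrealgebra.

Context {X : Type} (H : HOps X) (HH : is_heyting H).

Lemma hmeet_le_l (x y : X) : hle H (hmeet H x y) x.
Proof. exact (proj1 (proj1 (h_meet H HH x y _) (h_refl H HH _))). Qed.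

Lemma hmeet_le_r (x y : X) : hle H (hmeet H x y) y.
Proof. exact (proj2 (proj1 (h_meet H HH x y _) (h_refl H HH _))). Qed.

Lemma hle_join_l (x y : X) : hle H x (hjoin H x y).
Proof. exact (proj1 (proj1 (h_join H HH x y _) (h_refl H HH _))). Qed.

Lemma hle_join_r (x y : X) : hle H y (hjoin H x y).
Proof. exact (proj2 (proj1 (h_join H HH x y _) (h_refl H HH _))). Qed.

End HeytingPrealgebra.

Section Derivations.

Context {VS : VarSys} {Fsym Tsym Psym : Type}.
Context {Sg : Sig VS Fsym Tsym} {Pi : PSig VS Fsym Tsym Psym}.

Lemma Thm_formJ {T : ctx VS Fsym Tsym -> fm VS Fsym Tsym Psym -> fm VS Fsym Tsym Psym -> Prop}
    {Gc : ctx VS Fsym Tsym} {p q : fm VS Fsym Tsym Psym} :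
  is_theory Sg Pi T -> Thm Sg Pi T Gc p q -> formJ Sg Pi Gc p /\ formJ Sg Pi Gc q.
Proof. intros HT; induction 1; auto. Qed.

Lemma formJ_FAnd_inv {Gc} {p q : fm VS Fsym Tsym Psym} :
  formJ Sg Pi Gc (FAnd p q) -> formJ Sg Pi Gc p /\ formJ Sg Pi Gc q.
Proof. inversion 1; auto. Qed.

Lemma formJ_FOr_inv {Gc} {p q : fm VS Fsym Tsym Psym} :
  formJ Sg Pi Gc (FOr p q) -> formJ Sg Pi Gc p /\ formJ Sg Pi Gc q.
Proof. inversion 1; auto. Qed.

Lemma formJ_FImp_inv {Gc} {p q : fm VS Fsym Tsym Psym} :
  formJ Sg Pi Gc (FImp p q) -> formJ Sg Pi Gc p /\ formJ Sg Pi Gc q.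
Proof. inversion 1; auto. Qed.

Lemma formJ_FAll_inv {Gc x A} {p : fm VS Fsym Tsym Psym} :
  formJ Sg Pi Gc (FAll x A p) -> formJ Sg Pi (Gc ++ [(x, A)]) p.
Proof. inversion 1; auto. Qed.

Lemma formJ_FEx_inv {Gc x A} {p : fm VS Fsym Tsym Psym} :
  formJ Sg Pi Gc (FEx x A p) -> formJ Sg Pi (Gc ++ [(x, A)]) p.
Proof. inversion 1; auto. Qed.

End Derivations.

Section Soundness.

Context {VS : VarSys} {Fsym Tsym Psym : Type}.
Context {Sg : Sig VS Fsym Tsym} {Pi : PSig VS Fsym Tsym Psym}.
Context {C : Cwf} {HC : is_cwf C} {F : CwfMor (FSig Sg) C} {HF : is_cwf_morphism F}.
Context {D : HD C} (HDD : is_hyperdoctrine HC D).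
Context {T0 : ctx VS Fsym Tsym -> fm VS Fsym Tsym Psym -> fm VS Fsym Tsym Psym -> Prop}.
Context {G : forall X : Ob (FSig Sg), Pr (LT Sg Pi T0) X -> Pr D (Fob F X)}.
Context (HG : is_hd_morphism HF (LT Sg Pi T0) D G).

Local Notation L := (LT Sg Pi T0).
Local Notation ctx := (ctx VS Fsym Tsym).
Local Notation fm := (fm VS Fsym Tsym Psym).

(* Indexed by the raw context rather than by an object of F_Σ, so that the rules changing the
   context (quantifiers, substitution) need no transport along equalities of objects. *)
Definition G_valid (Gc : ctx) (p q : fm) : Prop :=
  forall (X : Ob (FSig Sg)) (hp : formJ Sg Pi (proj1_sig X) p) (hq : formJ Sg Pi (proj1_sig X) q),
    proj1_sig X = Gc -> hle (hops D (Fob F X)) (G X (exist _ p hp)) (G X (exist _ q hq)).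

Lemma G_proof_irrel (X : Ob (FSig Sg)) (p : fm) (h1 h2 : formJ Sg Pi (proj1_sig X) p) :
  G X (exist _ p h1) = G X (exist _ p h2).
Proof. now rewrite (proof_irrelevance _ h1 h2). Qed.

Lemma FOb_eq (X Y : Ob (FSig Sg)) : proj1_sig X = proj1_sig Y -> X = Y.
Proof.
  destruct X as [Gx hx], Y as [Gy hy]; simpl; intros <-.
  now rewrite (proof_irrelevance _ hx hy).
Qed.

Lemma G_valid_at (Gc : ctx) (X : Ob (FSig Sg)) (p q : fm)
    (hp : formJ Sg Pi (proj1_sig X) p) (hq : formJ Sg Pi (proj1_sig X) q) :
  proj1_sig X = Gc ->
  G_valid Gc p q <-> hle (hops D (Fob F X)) (G X (exist _ p hp)) (G X (exist _ q hq)).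
Proof.
  intros <-; split; [intros Hpq; exact (Hpq X hp hq eq_refl)|].
  intros Hpq X' hp' hq' EX. apply FOb_eq in EX; subst X'.
  now rewrite (G_proof_irrel X p hp' hp), (G_proof_irrel X q hq' hq).
Qed.

Lemma G_FTop (X : Ob (FSig Sg)) h : G X (exist _ FTop h) = htop (hops D (Fob F X)).
Proof. rewrite <- (hm_top _ _ _ (hdm_heyting HF L D G HG X)); apply G_proof_irrel. Qed.

Lemma G_FBot (X : Ob (FSig Sg)) h : G X (exist _ FBot h) = hbot (hops D (Fob F X)).
Proof. rewrite <- (hm_bot _ _ _ (hdm_heyting HF L D G HG X)); apply G_proof_irrel. Qed.

Lemma G_FAnd (X : Ob (FSig Sg)) (p q : fm) h hp hq :
  G X (exist _ (FAnd p q) h) = hmeet (hops D (Fob F X)) (G X (exist _ p hp)) (G X (exist _ q hq)).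
Proof. rewrite <- (hm_meet _ _ _ (hdm_heyting HF L D G HG X)); apply G_proof_irrel. Qed.

Lemma G_FOr (X : Ob (FSig Sg)) (p q : fm) h hp hq :
  G X (exist _ (FOr p q) h) = hjoin (hops D (Fob F X)) (G X (exist _ p hp)) (G X (exist _ q hq)).
Proof. rewrite <- (hm_join _ _ _ (hdm_heyting HF L D G HG X)); apply G_proof_irrel. Qed.

Lemma G_FImp (X : Ob (FSig Sg)) (p q : fm) h hp hq :
  G X (exist _ (FImp p q) h) = himp (hops D (Fob F X)) (G X (exist _ p hp)) (G X (exist _ q hq)).
Proof. rewrite <- (hm_imp _ _ _ (hdm_heyting HF L D G HG X)); apply G_proof_irrel. Qed.

Lemma G_valid_all_adj (Gc : ctx) x A (p q : fm) :
  formJ Sg Pi Gc p -> formJ Sg Pi (Gc ++ [(x, A)]) q ->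
  G_valid Gc p (FAll x A q) <-> G_valid (Gc ++ [(x, A)]) (fweak Gc x A p) q.
Proof.
  intros hp hq.
  destruct (ctx_snoc_inv (formJ_ctx hq)) as [HGc [hA ->]].
  set (X := exist _ Gc HGc : Ob (FSig Sg)).
  set (S := exist _ A hA : Ty X).
  set (P := exist _ p hp : Pr L X).
  set (R := exist _ q hq : Pr L (ext X S)).
  rewrite (G_valid_at Gc X p (FAll (fresh Gc) A q) hp (proj2_sig (hall L S R)) eq_refl).
  rewrite (G_valid_at (Gc ++ [(fresh Gc, A)]) (ext X S) (fweak Gc (fresh Gc) A p) q
             (proj2_sig (prsub L (pp S) P)) hq eq_refl).
  change (hle (hops D (Fob F X)) (G X P) (G X (hall L S R)) <->
          hle (hops D (Fob F (ext X S))) (G (ext X S) (prsub L (pp S) P)) (G (ext X S) R)).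
  rewrite (hdm_all HF L D G HG), (hall_adj_along HF HDD), (hdm_sub HF L D G HG).
  reflexivity.
Qed.

Lemma G_valid_ex_adj (Gc : ctx) x A (q p : fm) :
  formJ Sg Pi Gc p -> formJ Sg Pi (Gc ++ [(x, A)]) q ->
  G_valid Gc (FEx x A q) p <-> G_valid (Gc ++ [(x, A)]) q (fweak Gc x A p).
Proof.
  intros hp hq.
  destruct (ctx_snoc_inv (formJ_ctx hq)) as [HGc [hA ->]].
  set (X := exist _ Gc HGc : Ob (FSig Sg)).
  set (S := exist _ A hA : Ty X).
  set (P := exist _ p hp : Pr L X).
  set (R := exist _ q hq : Pr L (ext X S)).
  rewrite (G_valid_at Gc X (FEx (fresh Gc) A q) p (proj2_sig (hex L S R)) hp eq_refl).
  rewrite (G_valid_at (Gc ++ [(fresh Gc, A)]) (ext X S) q (fweak Gc (fresh Gc) A p)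
             hq (proj2_sig (prsub L (pp S) P)) eq_refl).
  change (hle (hops D (Fob F X)) (G X (hex L S R)) (G X P) <->
          hle (hops D (Fob F (ext X S))) (G (ext X S) R) (G (ext X S) (prsub L (pp S) P))).
  rewrite (hdm_ex HF L D G HG), (hex_adj_along HF HDD), (hdm_sub HF L D G HG).
  reflexivity.
Qed.

Lemma G_valid_fsub (Gc Dc : ctx) l (p q : fm) :
  morph VS Fsym Tsym Sg Dc Gc l -> formJ Sg Pi Gc p -> formJ Sg Pi Gc q ->
  G_valid Gc p q -> G_valid Dc (fsub Dc Gc l p) (fsub Dc Gc l q).
Proof.
  intros Hl hp hq Hpq X hp' hq' <-.
  set (X0 := exist _ Gc (formJ_ctx hp) : Ob (FSig Sg)).
  set (f := exist _ l Hl : Hom X X0).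
  set (P := exist _ p hp : Pr L X0).
  set (Q := exist _ q hq : Pr L X0).
  rewrite (G_proof_irrel X _ hp' (proj2_sig (prsub L f P))),
          (G_proof_irrel X _ hq' (proj2_sig (prsub L f Q))).
  change (hle (hops D (Fob F X)) (G X (prsub L f P)) (G X (prsub L f Q))).
  rewrite !(hdm_sub HF L D G HG).
  apply (hm_mono _ _ _ (hd_sub_mor HC D HDD _ _ _)).
  exact (Hpq X0 hp hq eq_refl).
Qed.

Section PropositionalRules.

Context (Gc : ctx).
Let Hh := hd_heyting HC D HDD.

Lemma G_valid_refl (p : fm) : G_valid Gc p p.
Proof. intros X hp hq _; rewrite (G_proof_irrel X p hp hq); apply (h_refl _ (Hh _)). Qed.

Lemma G_valid_trans (p r q : fm) :
  formJ Sg Pi Gc r -> G_valid Gc p r -> G_valid Gc r q -> G_valid Gc p q.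
Proof.
  intros hr Hpr Hrq X hp hq <-.
  exact (h_trans _ (Hh _) _ _ _ (Hpr X hp hr eq_refl) (Hrq X hr hq eq_refl)).
Qed.

Lemma G_valid_top (p : fm) : G_valid Gc p FTop.
Proof. intros X hp hq <-; rewrite G_FTop; apply (h_top _ (Hh _)). Qed.

Lemma G_valid_bot (p : fm) : G_valid Gc FBot p.
Proof. intros X hp hq <-; rewrite G_FBot; apply (h_bot _ (Hh _)). Qed.

Lemma G_valid_andE1 (r q : fm) : G_valid Gc (FAnd r q) r.
Proof.
  intros X hp hq <-; destruct (formJ_FAnd_inv hp) as [hr hq'].
  rewrite (G_FAnd X r q hp hr hq'), (G_proof_irrel X r hq hr); apply hmeet_le_l, Hh.
Qed.

Lemma G_valid_andE2 (r q : fm) : G_valid Gc (FAnd r q) q.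
Proof.
  intros X hp hq <-; destruct (formJ_FAnd_inv hp) as [hr hq'].
  rewrite (G_FAnd X r q hp hr hq'), (G_proof_irrel X q hq hq'); apply hmeet_le_r, Hh.
Qed.

Lemma G_valid_andI (p r q : fm) : G_valid Gc p r -> G_valid Gc p q -> G_valid Gc p (FAnd r q).
Proof.
  intros Hpr Hpq X hp hq <-; destruct (formJ_FAnd_inv hq) as [hr hq'].
  rewrite (G_FAnd X r q hq hr hq').
  apply (h_meet _ (Hh _)); split; [apply Hpr | apply Hpq]; reflexivity.
Qed.

Lemma G_valid_orI1 (r q : fm) : G_valid Gc r (FOr r q).
Proof.
  intros X hp hq <-; destruct (formJ_FOr_inv hq) as [hr hq'].
  rewrite (G_FOr X r q hq hr hq'), (G_proof_irrel X r hp hr); apply hle_join_l, Hh.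
Qed.

Lemma G_valid_orI2 (r q : fm) : G_valid Gc q (FOr r q).
Proof.
  intros X hp hq <-; destruct (formJ_FOr_inv hq) as [hr hq'].
  rewrite (G_FOr X r q hq hr hq'), (G_proof_irrel X q hp hq'); apply hle_join_r, Hh.
Qed.

Lemma G_valid_orE (r q p : fm) : G_valid Gc r p -> G_valid Gc q p -> G_valid Gc (FOr r q) p.
Proof.
  intros Hrp Hqp X hp hq <-; destruct (formJ_FOr_inv hp) as [hr hq'].
  rewrite (G_FOr X r q hp hr hq').
  apply (h_join _ (Hh _)); split; [apply Hrp | apply Hqp]; reflexivity.
Qed.

Lemma G_valid_impI (r q p : fm) : G_valid Gc (FAnd r q) p -> G_valid Gc r (FImp q p).
Proof.
  intros Hrqp X hr hqp <-; destruct (formJ_FImp_inv hqp) as [hq hp].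
  rewrite (G_FImp X q p hqp hq hp).
  apply (h_imp _ (Hh _)); rewrite <- (G_FAnd X r q (FA_and hr hq) hr hq).
  apply Hrqp; reflexivity.
Qed.

Lemma G_valid_impE (r q p : fm) : G_valid Gc r (FImp q p) -> G_valid Gc (FAnd r q) p.
Proof.
  intros Hrqp X hrq hp <-; destruct (formJ_FAnd_inv hrq) as [hr hq].
  rewrite (G_FAnd X r q hrq hr hq).
  apply (h_imp _ (Hh _)); rewrite <- (G_FImp X q p (FA_imp hq hp) hq hp).
  apply Hrqp; reflexivity.
Qed.

End PropositionalRules.

Lemma Thm_sound (T : ctx -> fm -> fm -> Prop) :
  is_theory Sg Pi T ->
  (forall (X : Ob (FSig Sg)) (p q : Pr L X),
      T (proj1_sig X) (proj1_sig p) (proj1_sig q) -> hle (hops D (Fob F X)) (G X p) (G X q)) ->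
  forall Gc p q, Thm Sg Pi T Gc p q -> G_valid Gc p q.
Proof.
  intros HT HTG Gc p q Hd.
  induction Hd as
    [Gc p q Hax | | Gc p r q _ _ Hpr | | | | | | | | | | | Gc x A p q hp hall _ IH
    | Gc x A p q _ hq Hd IH | Gc x A q p hex hp _ IH | Gc x A q p hq _ Hd IH
    | Gc Dc l p q Hl _ _ Hd IH];
    eauto using G_valid_refl, G_valid_top, G_valid_bot, G_valid_andE1, G_valid_andE2,
      G_valid_andI, G_valid_orI1, G_valid_orI2, G_valid_orE, G_valid_impI, G_valid_impE.
  - intros X hp hq <-; exact (HTG X (exist _ p hp) (exist _ q hq) Hax).
  - eapply G_valid_trans; eauto; apply (Thm_formJ HT Hpr).
  - exact (proj2 (G_valid_all_adj Gc x A p q hp (formJ_FAll_inv hall)) IH).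
  - exact (proj1 (G_valid_all_adj Gc x A p q (proj1 (Thm_formJ HT Hd)) hq) IH).
  - exact (proj2 (G_valid_ex_adj Gc x A q p hp (formJ_FEx_inv hex)) IH).
  - exact (proj1 (G_valid_ex_adj Gc x A q p (proj2 (Thm_formJ HT Hd)) hq) IH).
  - destruct (Thm_formJ HT Hd) as [hp hq].
    exact (G_valid_fsub Gc Dc l p q Hl hp hq IH).
Qed.

Lemma is_hd_morphism_of_Thm_mono (T : ctx -> fm -> fm -> Prop) :
  (forall (X : Ob (FSig Sg)) (p q : Pr L X),
      Thm Sg Pi T (proj1_sig X) (proj1_sig p) (proj1_sig q) ->
      hle (hops D (Fob F X)) (G X p) (G X q)) ->
  is_hd_morphism HF (LT Sg Pi T) D G.
Proof.
  intros Hmono; destruct HG as [Hheyt Hsub Hall Hex]; split; auto.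
  intros X; destruct (Hheyt X); split; auto.
Qed.

End Soundness.

Theorem mainTheorem20
  (VS : VarSys) (Fsym Tsym Psym : Type)
  (Sg : Sig VS Fsym Tsym) (HSg : is_signature Sg)
  (Pi : PSig VS Fsym Tsym Psym) (HPi : is_pred_sig Sg Pi)
  (C : Cwf) (HC : is_cwf C)
  (F : CwfMor (FSig Sg) C) (HF : is_cwf_morphism F)
  (D : HD C) (HDD : is_hyperdoctrine HC D)
  (G : forall X : Ob (FSig Sg), Pr (LT Sg Pi emptyT) X -> Pr D (Fob F X))
  (HG : is_hd_morphism HF (LT Sg Pi emptyT) D G)
  (T : ctx VS Fsym Tsym -> fm VS Fsym Tsym Psym -> fm VS Fsym Tsym Psym -> Prop)
  (HT : is_theory Sg Pi T)
  (HTG : forall (X : Ob (FSig Sg)) (p q : Pr (LT Sg Pi emptyT) X),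
      T (proj1_sig X) (proj1_sig p) (proj1_sig q) ->
      hle (hops D (Fob F X)) (G X p) (G X q)) :
  (forall (X : Ob (FSig Sg)) (p q : Pr (LT Sg Pi emptyT) X),
      Thm Sg Pi T (proj1_sig X) (proj1_sig p) (proj1_sig q) ->
      hle (hops D (Fob F X)) (G X p) (G X q)) /\
  is_hd_morphism HF (LT Sg Pi T) D G.
Proof.
  assert (Hsound : forall (X : Ob (FSig Sg)) (p q : Pr (LT Sg Pi emptyT) X),
             Thm Sg Pi T (proj1_sig X) (proj1_sig p) (proj1_sig q) ->
             hle (hops D (Fob F X)) (G X p) (G X q)).
  { intros X [p hp] [q hq] Hpq.
    exact (Thm_sound HDD HG T HT HTG _ _ _ Hpq X hp hq eq_refl). }
  split; [exact Hsound|].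
  exact (is_hd_morphism_of_Thm_mono HG T Hsound).
Qed.
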